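(* A finite simple graph $G$ is pseudo-Gorenstein$^{*}$ if and only if $P_G(-1)=(-1)^{\alpha(G)}$.
   Context: Let $G$ be a finite simple graph on vertex set $[N]$, $K$ a field, $S=K[x_1,\dots,x_N]$, and $I(G)\subset S$ the edge ideal generated by $x_ix_j$ for $\{i,j\}\in E(G)$. Let $\alpha(G)$ be the independence number (which equals $\dim S/I(G)$). The Hilbert series of $S/I(G)$ is written uniquely as $(h_0+h_1t+\dots+h_st^s)/(1-t)^{\alpha(G)}$ with $h_s\neq 0$; the numerator $h_G(t)$ is the $h$-polynomial. The $\mathfrak a$-invariant is $\mathfrak a(G)=\deg h_G(t)-\alpha(G)$. $G$ is called pseudo-Gorenstein$^{*}$ if $h_s=1$ and $\mathfrak a(G)=0$. The independence polynomial is $P_G(x)=\sum_i g_ix^i$, where $g_i$ is the number of independent sets of $G$ of size $i$. *)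

From mathcomp Require Import all_boot all_order all_algebra.
Set Implicit Arguments. Unset Strict Implicit. Unset Printing Implicit Defensive.
Import GRing.Theory Num.Theory.

(* A finite simple graph: vertex type T : finType, edge relation e : rel T,
   assumed symmetric and irreflexive (hypotheses of the theorem). *)

Section Graph.
Variables (T : finType) (e : rel T).

Definition indep (A : {set T}) : bool :=
  [forall x in A, forall y in A, ~~ e x y].

Definition alpha : nat := \max_(A : {set T} | indep A) #|A|.

Definition indep_poly : {poly int} :=
  \sum_(A : {set T} | indep A) 'X^#|A|.

(* support of a monomial (exponent vector) *)
Definition msupp d (m : {ffun T -> 'I_d.+1}) : {set T} := [set v | m v != ord0].

(* Hilbert function of S/I(G) in degree d: the number of monomials of degree d
   not lying in the monomial ideal I(G), i.e. whose support is independent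
   (these monomials form a K-basis of (S/I(G))_d). *)
Definition hilb (d : nat) : nat :=
  #|[set m : {ffun T -> 'I_d.+1} | (\sum_(v : T) (m v : nat) == d)%N
                                   && indep (msupp m)]|.

(* coefficients of the h-polynomial: the power series (1-t)^alpha * HS(t),
   where HS(t) = sum_d hilb d t^d *)
Definition hcoef (d : nat) : int :=
  \sum_(i < d.+1) (-1) ^+ i * ('C(alpha, i))%:Z * (hilb (d - i))%:Z.

(* pseudo-Gorenstein*: the h-polynomial has degree s = alpha (a-invariant 0)
   and leading coefficient h_s = 1. *)
Definition pseudo_gorenstein_star : Prop :=
  hcoef alpha = 1 /\ (forall d, (alpha < d)%N -> hcoef d = 0).

End Graph.

From mathcomp Require Import all_boot all_order all_algebra.
Import GRing.Theory Num.Theory.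
Local Open Scope ring_scope.

(** A standard monomial of S/I(G) has an independent support A, and the
    monomials of degree d with support A are counted by the coefficient of
    t^d in (t/(1-t))^|A|.  Hence the h-polynomial (1-t)^alpha HS(t) is the sum
    of t^|A| (1-t)^(alpha-|A|) over the independent sets A: its degree is at
    most alpha and its coefficient of t^alpha is
    sum_A (-1)^(alpha-|A|) = (-1)^alpha P_G(-1). *)

Section TruncatedPowerSeries.
Context {R : comNzRingType}.
Implicit Types p q r : {poly R}.

Lemma take_polyMl_eq {m p q} :
  take_poly m p = take_poly m q -> forall r, take_poly m (r * p) = take_poly m (r * q).
Proof.
move=> eq_pq r; apply/polyP => i; rewrite !coef_take_poly.
case: ifP => // lt_im; rewrite !coefM; apply: eq_bigr => j _.
have := congr1 (fun s : {poly R} => s`_(i - j)) eq_pq.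
by rewrite !coef_take_poly (leq_ltn_trans (leq_subr _ _) lt_im) => ->.
Qed.

Lemma take_polyX_eq {m p q} k :
  take_poly m p = take_poly m q -> take_poly m (p ^+ k) = take_poly m (q ^+ k).
Proof.
move=> eq_pq; elim: k => [|k IHk]; first by rewrite !expr0.
by rewrite !exprSr (take_polyMl_eq eq_pq) mulrC (take_polyMl_eq IHk) mulrC.
Qed.

Lemma coef_1subX_exp a i :
  ((1 - 'X) ^+ a : {poly R})`_i = (-1) ^+ i * 'C(a, i)%:R.
Proof.
elim: a i => [|a IHa] i.
  by rewrite expr0 coef1; case: i => [|i]; rewrite ?mulr1 // bin0n mulr0.
rewrite exprSr mulrBr mulr1 coefB coefMX IHa.
case: i => [|i] /=; first by rewrite subr0 !bin0.
by rewrite IHa binS natrD exprS mulN1r mulrDr !mulNr.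
Qed.

(* t + ... + t^n agrees with t/(1-t) up to degree n, which is all that the
   coefficient of t^n in a Hilbert series identity involves. *)
Definition geomX n : {poly R} := \sum_(j < n) 'X^(j.+1).

Lemma coef_geomX n i : (geomX n)`_i = (0 < i <= n)%N%:R.
Proof.
rewrite /geomX coef_sum; under eq_bigr do rewrite coefXn.
case: i => [|i] /=; first by rewrite big1.
under eq_bigr do rewrite eqSS.
have [le_in | lt_ni] := leqP i.+1 n.
  rewrite (bigD1 (Ordinal le_in)) //= eqxx big1 ?addr0 // => j ne_ji.
  by case: eqP => // eq_ij; case/eqP: ne_ji; apply: val_inj; rewrite /= eq_ij.
rewrite big1 // => j _; case: eqP => // eq_ij.
by move: (ltn_ord j); rewrite -eq_ij ltnNge -ltnS lt_ni.
Qed.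

Lemma mul_1subX_geomX n : (1 - 'X) * geomX n = 'X - 'X^(n.+1).
Proof.
elim: n => [|n IHn]; first by rewrite /geomX big_ord0 mulr0 subrr.
rewrite /geomX big_ord_recr /= mulrDr -/(geomX n) IHn !exprS.
by rewrite mulrBl mul1r addrA subrK.
Qed.

Lemma take_poly_geomX {n D} : (n <= D)%N ->
  take_poly n.+1 (geomX D) = take_poly n.+1 (geomX n).
Proof.
move=> le_nD; apply/polyP => i; rewrite !coef_take_poly !coef_geomX.
case: ifP => //; rewrite ltnS => le_in.
by rewrite le_in (leq_trans le_in le_nD) andbT.
Qed.

Lemma coef_geomX_exp {n D} k : (n <= D)%N -> (geomX D ^+ k)`_n = (geomX n ^+ k)`_n.
Proof.
move=> le_nD; have := take_polyX_eq k (take_poly_geomX le_nD).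
by move/(congr1 (fun s : {poly R} => s`_n)); rewrite !coef_take_poly ltnSn.
Qed.

Lemma coef_1subX_geomX a k d : (k <= a)%N ->
  ((1 - 'X) ^+ a * geomX d ^+ k)`_d = ((1 - 'X) ^+ (a - k) * 'X^k)`_d.
Proof.
move=> le_ka; rewrite -{1}(subnK le_ka) exprD -mulrA -exprMn mul_1subX_geomX.
have take_X : take_poly d.+1 ('X - 'X^(d.+1)) = take_poly d.+1 ('X : {poly R}).
  apply/polyP => i; rewrite !coef_take_poly coefB coefXn.
  by case: ifP => // /ltn_eqF ->; rewrite subr0.
have := take_polyMl_eq (take_polyX_eq k take_X) ((1 - 'X) ^+ (a - k)).
by move/(congr1 (fun s : {poly R} => s`_d)); rewrite !coef_take_poly ltnSn.
Qed.

End TruncatedPowerSeries.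

Lemma coef_sum_Xn (R : comNzRingType) (I : finType) (P : pred I) (deg : I -> nat) i :
  (\sum_(x | P x) 'X^(deg x) : {poly R})`_i = #|[pred x | P x & deg x == i]|%:R.
Proof.
rewrite coef_sum -sum1_card natr_sum big_mkcond [RHS]big_mkcond /=.
by apply: eq_bigr => x _; rewrite coefXn eq_sym inE; case: (P x); case: eqP.
Qed.

Section Monomials.
Context {R : comNzRingType} {T : finType}.

Lemma sum_Xn_msupp n (A : {set T}) :
  \sum_(m : {ffun T -> 'I_n.+1} | msupp m == A) 'X^(\sum_v (m v : nat))
  = geomX n ^+ #|A| :> {poly R}.
Proof.
pose Q v (j : 'I_n.+1) := (j != ord0) == (v \in A).
have factorE v : \sum_(j | Q v j) 'X^j = if v \in A then geomX n else 1 :> {poly R}.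
  rewrite /Q; case: (v \in A); rewrite big_mkcond big_ord_recl /= ?eqxx.
    by rewrite add0r; apply: eq_bigr.
  by rewrite expr0 big1_eq addr0.
rewrite -prodr_const [RHS]big_mkcond /=.
rewrite [RHS](eq_bigr (fun v => \sum_(j | Q v j) 'X^j)); last by move=> v _; rewrite factorE.
rewrite bigA_distr_big_dep; apply: eq_big => [m | m _]; last by rewrite prodrXr.
apply/eqP/familyP => [eq_mA v | Qm]; first by rewrite unfold_in /Q -eq_mA inE.
by apply/setP => v; have := Qm v; rewrite !inE => /eqP.
Qed.

End Monomials.

Section IndependentSets.
Variables (T : finType) (e : rel T).

Lemma indep_card_le_alpha A : indep e A -> (#|A| <= alpha e)%N.
Proof. exact: (leq_bigmax_cond (F := fun B : {set T} => #|B|)). Qed.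

Lemma hilbE (R : comNzRingType) n :
  (hilb e n)%:R = \sum_(A | indep e A) (geomX n ^+ #|A| : {poly R})`_n.
Proof.
rewrite /hilb -sum1_card (partition_big (@msupp T n) (indep e)) /=; last first.
  by move=> m; rewrite inE => /andP[].
rewrite natr_sum; apply: eq_bigr => A indepA.
rewrite -sum_Xn_msupp coef_sum_Xn sum1_card; congr (_%:R); apply: eq_card => m.
rewrite unfold_in !inE.
by case: (msupp m =P A) => [->|_]; rewrite ?eqxx ?indepA ?andbT ?andbF.
Qed.

Definition hpoly : {poly int} :=
  \sum_(A | indep e A) (1 - 'X) ^+ (alpha e - #|A|) * 'X^#|A|.

Lemma hcoefE d : hcoef e d = hpoly`_d.
Proof.
rewrite /hcoef /hpoly coef_sum.
under eq_bigr => i _ do rewrite -!natz -coef_1subX_exp hilbE mulr_sumr.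
rewrite exchange_big /=; apply: eq_bigr => A /indep_card_le_alpha le_A.
rewrite -coef_1subX_geomX // coefM; apply: eq_bigr => i _.
by rewrite (coef_geomX_exp _ (leq_subr i d)).
Qed.

Lemma coef_hpoly_gt d : (alpha e < d)%N -> hpoly`_d = 0.
Proof.
move=> lt_alpha_d; rewrite coef_sum big1 // => A /indep_card_le_alpha le_A.
rewrite coefMXn coef_1subX_exp ltnNge (leq_trans le_A (ltnW lt_alpha_d)) /=.
by rewrite bin_small ?mulr0 // ltn_sub2r // (leq_ltn_trans le_A).
Qed.

Lemma coef_hpoly_alpha : hpoly`_(alpha e) = (-1) ^+ alpha e * (indep_poly e).[-1].
Proof.
rewrite /indep_poly horner_sum mulr_sumr coef_sum; apply: eq_bigr => A.
move=> /indep_card_le_alpha le_A; rewrite coefMXn coef_1subX_exp ltnNge le_A /=.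
rewrite binn mulr1 hornerXn -{2}(subnK le_A) exprD -mulrA -expr2.
by rewrite sqrr_sign mulr1.
Qed.

End IndependentSets.

Theorem corollary1p4 (T : finType) (e : rel T)
    (e_sym : symmetric e) (e_irr : irreflexive e) :
  pseudo_gorenstein_star e <-> (indep_poly e).[-1] = (-1) ^+ alpha e.
Proof.
have hcoef_gt d : (alpha e < d)%N -> hcoef e d = 0.
  by rewrite hcoefE; exact: coef_hpoly_gt.
have hcoef_alpha : hcoef e (alpha e) = (-1) ^+ alpha e * (indep_poly e).[-1].
  by rewrite hcoefE coef_hpoly_alpha.
rewrite /pseudo_gorenstein_star hcoef_alpha; split=> [[h_alpha _] | P_alpha].
  by rewrite -[LHS](signrMK (alpha e)) h_alpha mulr1.
split; last exact: hcoef_gt.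
by rewrite P_alpha -expr2 sqrr_sign.
Qed.
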